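(* Let $\mathcal{M}=(E,\rho)$ be a $q$-matroid and $\mathcal{Z}(\mathcal{M})$ its set of cyclic flats. Then $(\mathcal{Z}(\mathcal{M}),\le)$ is a lattice with meet and join $Z_1\wedge Z_2=\mathrm{cyc}(Z_1\cap Z_2)$ and $Z_1\vee Z_2=\mathrm{cl}(Z_1+Z_2)$. Moreover $\rho(Z_1\wedge Z_2)=\rho(Z_1\cap Z_2)-\dim\big((Z_1\cap Z_2)/(Z_1\wedge Z_2)\big)$ and $\rho(Z_1\vee Z_2)=\rho(Z_1+Z_2)$, and consequently \[ \rho(Z_1)+\rho(Z_2)\ge\rho(Z_1\vee Z_2)+\rho(Z_1\wedge Z_2)+\dim\big((Z_1\cap Z_2)/(Z_1\wedge Z_2)\big) \] for all $Z_1,Z_2\in\mathcal{Z}(\mathcal{M})$.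
   Context: Let $\mathbb{F}=\mathbb{F}_q$. A $q$-matroid is $\mathcal{M}=(E,\rho)$, $E$ a finite-dimensional $\mathbb{F}$-vector space, $\rho$ from subspaces to $\mathbb{Z}_{\ge0}$ with $0\le\rho(V)\le\dim V$, monotone and submodular. Flat: $\rho(F+\langle x\rangle)>\rho(F)$ for all $x\notin F$. Closure: $\mathrm{cl}(V)=\sum\{\langle x\rangle:\rho(V+\langle x\rangle)=\rho(V)\}$. Cyclic core: $\mathrm{cyc}(V)=\{x\in V\mid\rho(W)=\rho(V)\text{ for all }W\le V\text{ with }W+\langle x\rangle=V\}$; $V$ is cyclic if $\mathrm{cyc}(V)=V$. A cyclic flat is a subspace that is both a flat and cyclic. *)

From HB Require Import structures.
From mathcomp Require Import all_boot all_order all_algebra all_field.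
From mathcomp Require Import boolp.
Set Implicit Arguments. Unset Strict Implicit. Unset Printing Implicit Defensive.
Import GRing.Theory.
Local Open Scope ring_scope.

(* A q-matroid on E = vT, a finite-dimensional vector space over a finite
   field F = F_q, given by its rank function rho on subspaces. *)
Section QMatroid.
Variables (F : finFieldType) (vT : vectType F).
Implicit Types (V W X : {vspace vT}) (x : vT).

Definition qmatroid (rho : {vspace vT} -> nat) : Prop :=
  [/\ forall V, (rho V <= \dim V)%N,
      forall V W, (V <= W)%VS -> (rho V <= rho W)%N
    & forall V W, (rho (V + W)%VS + rho (V :&: W)%VS <= rho V + rho W)%N].

Variable rho : {vspace vT} -> nat.

Definition flat V : Prop :=
  forall x, x \notin V -> (rho V < rho (V + <[x]>)%VS)%N.

Definition cl V : {vspace vT} :=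
  (\sum_(x : finvect_type vT | rho (V + <[x : vT]>)%VS == rho V) <[x : vT]>)%VS.

Definition in_cyc V x : Prop :=
  x \in V /\ forall W, (W <= V)%VS -> (W + <[x]>)%VS = V -> rho W = rho V.

Definition cyc V : {vspace vT} :=
  (\sum_(x : finvect_type vT | `[< in_cyc V x >]) <[x : vT]>)%VS.

(* V is cyclic iff cyc(V) = V, i.e. every element of V lies in the cyclic core *)
Definition cyclic V : Prop := forall x, x \in V -> in_cyc V x.

Definition cyclic_flat V : Prop := flat V /\ cyclic V.

End QMatroid.

From HB Require Import structures.
From mathcomp Require Import all_boot all_order all_algebra all_field.
From mathcomp Require Import boolp zify.
Set Implicit Arguments. Unset Strict Implicit. Unset Printing Implicit Defensive.
Import GRing.Theory.

(* The closure cl V is the largest superspace of V of the same rank, hence the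
   least flat containing V.  The cyclic core cyc V is contained in every
   hyperplane W of V with rho W < rho V.  Starting from A = V and repeatedly
   intersecting A with such a hyperplane that misses a point of A outside
   cyc V keeps rho A + (dim V - dim A) = rho V while dim A drops, so
   rho (cyc V) = rho V - (dim V - dim (cyc V)); this forces cyc V to be cyclic,
   and flat when V is.  If Z is cyclic, Z <= U and W + <y> = U with y in Z, then
   Z :&: W + <y> = Z, so rho (Z :&: W) = rho Z and submodularity gives
   rho W = rho U.  Hence cyclic subspaces of V lie in cyc V, and sums and
   closures of cyclic subspaces are cyclic.  The final inequality is
   submodularity for Z1 and Z2 rewritten with these rank formulas. *)

Section VectorLines.
Variables (F : fieldType) (vT : vectType F).
Implicit Types (U W : {vspace vT}) (x y : vT).

Lemma dimv_add_line W x : x \notin W -> \dim (W + <[x]>) = (\dim W).+1.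
Proof.
move=> xW; apply/eqP; rewrite eqn_leq.
have [+ _] := dimv_add_leqif W <[x]>.
have x_neq0 : x != 0%R by apply: contraNneq xW => ->; rewrite mem0v.
rewrite dim_vline x_neq0 addn1 => -> /=.
rewrite ltn_neqAle dimvS ?addvSl // andbT (dimv_leqif_eq (addvSl _ _)).
by apply: contraNneq xW => ->; rewrite memvE addvSr.
Qed.

Lemma addv_line_exchange W U x y :
  (W + <[x]> = U)%VS -> y \in U -> y \notin W -> (W + <[y]> = U)%VS.
Proof.
move=> WxU yU yW; have WU : (W <= U)%VS by rewrite -WxU addvSl.
have [xW | xW] := boolP (x \in W).
  by move: yW; rewrite -(addv_idPl xW) WxU yU.
apply/eqP; rewrite eqEdim subv_add WU -memvE yU /=.
by rewrite -WxU !dimv_add_line.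
Qed.

End VectorLines.

Section QMatroidTheory.
Variables (F : finFieldType) (vT : vectType F) (rho : {vspace vT} -> nat).
Hypothesis rho_qmatroid : qmatroid rho.
Implicit Types (A U V W Z : {vspace vT}) (x y : vT).

Lemma rho_le_dim V : rho V <= \dim V.
Proof. by case: rho_qmatroid. Qed.

Lemma rho_mono V W : (V <= W)%VS -> rho V <= rho W.
Proof. by case: rho_qmatroid => _ + _; apply. Qed.

Lemma rho_sub_eq V W : (V <= W)%VS -> rho W <= rho V -> rho V = rho W.
Proof. by move=> VW le_WV; apply/eqP; rewrite eqn_leq le_WV rho_mono. Qed.

Lemma rho_submod V W : rho (V + W)%VS + rho (V :&: W)%VS <= rho V + rho W.
Proof. by case: rho_qmatroid. Qed.

Lemma rho_addv_le V W : rho (V + W)%VS <= rho V + rho W.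
Proof. exact: leq_trans (leq_addr _ _) (rho_submod V W). Qed.

Lemma rho_le_codim W V : (W <= V)%VS -> rho V <= rho W + (\dim V - \dim W).
Proof.
move=> WV; have sumV : (W + (V :\: W) = V)%VS by rewrite addvC addv_diff (addv_idPl WV).
have := rho_addv_le W (V :\: W); have := rho_le_dim (V :\: W).
have := dimv_cap_compl V W; rewrite sumV (capv_idPr WV); lia.
Qed.

Lemma flat_rank_add_line Z U x :
  flat rho Z -> (U <= Z)%VS -> x \notin Z -> rho U < rho (U + <[x]>)%VS.
Proof.
move=> flatZ UZ xZ; have := flatZ x xZ; have := rho_submod Z (U + <[x]>).
rewrite addvA (addv_idPl UZ).
have := rho_mono (_ : U <= Z :&: (U + <[x]>))%VS; rewrite subv_cap UZ addvSl.
move=> /(_ isT); lia.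
Qed.

Lemma flat_cap Z1 Z2 : flat rho Z1 -> flat rho Z2 -> flat rho (Z1 :&: Z2)%VS.
Proof.
move=> flat1 flat2 x; rewrite memv_cap negb_and => /orP[xZ|xZ].
  exact: flat_rank_add_line flat1 (capvSl _ _) xZ.
exact: flat_rank_add_line flat2 (capvSr _ _) xZ.
Qed.

Lemma rho_add_cl V : rho (V + cl rho V)%VS = rho V.
Proof.
apply/esym/rho_sub_eq; first exact: addvSl.
rewrite /cl; elim/big_ind: _ => [|U1 U2|y /eqP <- //]; first by rewrite addv0.
move=> leU1 leU2; have := rho_submod (V + U1) (V + U2).
have -> : (V + U1 + (V + U2) = V + (U1 + U2))%VS.
  by rewrite [(V + U2)%VS]addvC addvA addvC !addvA addvv -addvA.
have := rho_mono (_ : V <= (V + U1) :&: (V + U2))%VS; rewrite subv_cap !addvSl.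
move=> /(_ isT); lia.
Qed.

Lemma mem_cl V x : (x \in cl rho V) = (rho (V + <[x]>)%VS == rho V).
Proof.
apply/idP/eqP => [xV | rhoVx].
  apply/esym/rho_sub_eq; first exact: addvSl.
  by rewrite -(rho_add_cl V) rho_mono // addvS // -memvE.
rewrite memvE /cl; apply: (sumv_sup (x : finvect_type vT)) => //=.
by rewrite rhoVx.
Qed.

Lemma subv_cl V : (V <= cl rho V)%VS.
Proof. by apply/subvP => x xV; rewrite mem_cl (addv_idPl _) // -memvE. Qed.

Lemma rho_cl V : rho (cl rho V) = rho V.
Proof. by rewrite -{1}(addv_idPr (subv_cl V)) rho_add_cl. Qed.

Lemma cl_flat V : flat rho (cl rho V).
Proof.
move=> x; apply: contraNT; rewrite -leqNgt rho_cl mem_cl => le_clx_V.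
apply/eqP/esym/rho_sub_eq; first exact: addvSl.
by apply: leq_trans le_clx_V; rewrite rho_mono // addvS ?subv_cl.
Qed.

Lemma cl_min Z V : flat rho Z -> (V <= Z)%VS -> (cl rho V <= Z)%VS.
Proof.
move=> flatZ VZ; apply/subvP => x; rewrite mem_cl; apply: contraTT => xZ.
by rewrite neq_ltn (flat_rank_add_line flatZ VZ xZ) orbT.
Qed.

Lemma cyc_sub V : (cyc rho V <= V)%VS.
Proof. by apply/subv_sumP => x /asboolP [xV _]; rewrite -memvE. Qed.

Lemma in_cyc_intro V x :
  x \in V -> (forall W, (W + <[x]> = V)%VS -> rho V <= rho W) -> in_cyc rho V x.
Proof.
move=> xV geV; split=> // W _ WxV.
by apply: rho_sub_eq; [rewrite -WxV addvSl | exact: geV].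
Qed.

Lemma in_cyc_hyperplane V W x y :
  in_cyc rho V x -> (W + <[y]> = V)%VS -> rho W < rho V -> x \in W.
Proof.
move=> [xV cycx] WyV; apply: contraTT => xW; rewrite -leqNgt.
rewrite (cycx W) //; last exact: addv_line_exchange WyV xV xW.
by rewrite -WyV addvSl.
Qed.

Lemma cyc_sub_hyperplane V W y :
  (W + <[y]> = V)%VS -> rho W < rho V -> (cyc rho V <= W)%VS.
Proof.
move=> WyV ltWV; apply/subv_sumP => x /asboolP cycx.
by rewrite -memvE (in_cyc_hyperplane cycx WyV).
Qed.

Lemma mem_cyc V x : x \in cyc rho V <-> in_cyc rho V x.
Proof.
split=> [xC | cycx]; last first.
  by rewrite memvE; apply: (sumv_sup (x : finvect_type vT)) => //=; apply/asboolP.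
apply: in_cyc_intro => [|W WxV]; first exact: subvP (cyc_sub V) x xC.
rewrite leqNgt; apply/negP => ltWV.
have xW : x \in W := subvP (cyc_sub_hyperplane WxV ltWV) x xC.
by move: ltWV; rewrite -WxV (addv_idPl _) ?ltnn // -memvE.
Qed.

Lemma exists_hyperplane_notin_cyc V x : x \in V -> x \notin cyc rho V ->
  exists2 W, (W + <[x]> = V)%VS & rho W < rho V.
Proof.
move=> xV; apply: contraNP => noW; apply/mem_cyc/in_cyc_intro => // W WxV.
by rewrite leqNgt; apply/negP => ltWV; apply: noW; exists W.
Qed.

Lemma codim_tight_cap_hyperplane V A W x :
    (A <= V)%VS -> x \in A -> (W + <[x]> = V)%VS -> rho W < rho V ->
    rho A + (\dim V - \dim A) <= rho V ->
  rho (A :&: W)%VS + (\dim V - \dim (A :&: W)) <= rho V /\ \dim (A :&: W) < \dim A.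
Proof.
move=> AV xA WxV ltWV tightA.
have xW : x \notin W.
  by apply: contraTN ltWV => xW; rewrite -WxV (addv_idPl _) ?ltnn // -memvE.
have AWV : (A + W = V)%VS.
  apply/eqP; rewrite eqEsubv subv_add AV -WxV addvSl /=.
  by rewrite addvC addvS // -memvE.
have := dimv_sum_cap A W; have := rho_submod A W; rewrite AWV.
have := dimv_add_line xW; rewrite WxV; have := dimvS AV; lia.
Qed.

Lemma cyc_rank_le V : rho (cyc rho V) + (\dim V - \dim (cyc rho V)) <= rho V.
Proof.
suff tight_cyc A : (A <= V)%VS -> rho A + (\dim V - \dim A) <= rho V ->
    rho (cyc rho V) + (\dim V - \dim (cyc rho V)) <= rho V.
  by apply: (tight_cyc V); rewrite ?subvv ?subnn ?addn0.
have [n] := ubnP (\dim A); elim: n A => // n IH A /ltnSE dimA AV tightA.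
have [AC | /subvPn [x xA xC]] := boolP (A <= cyc rho V)%VS.
  have := rho_le_codim AC; have := dimvS AC; have := dimvS (cyc_sub V); lia.
have [W WxV ltWV] := exists_hyperplane_notin_cyc (subvP AV x xA) xC.
have [tightAW ltAW] := codim_tight_cap_hyperplane AV xA WxV ltWV tightA.
apply: (IH (A :&: W)%VS) => //; first exact: leq_trans ltAW dimA.
exact: subv_trans (capvSl _ _) AV.
Qed.

Lemma cyc_rank V : rho (cyc rho V) + (\dim V - \dim (cyc rho V)) = rho V.
Proof. by apply/eqP; rewrite eqn_leq cyc_rank_le rho_le_codim ?cyc_sub. Qed.

Lemma cyc_cyclic V : cyclic rho (cyc rho V).
Proof.
set C := cyc rho V; move=> x xC; apply: in_cyc_intro => // W WxC.
have CV : (C <= V)%VS := cyc_sub V.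
have WDxV : (W + (V :\: C) + <[x]> = V)%VS.
  by rewrite -addvA [(_ :\: _ + _)%VS]addvC addvA WxC addvC addv_diff (addv_idPl CV).
have WDV : (W + (V :\: C) <= V)%VS by rewrite -{2}WDxV addvSl.
have [_ cycx] := (mem_cyc V x).1 xC; have := cycx _ WDV WDxV.
have := rho_addv_le W (V :\: C); have := rho_le_dim (V :\: C).
have := dimv_cap_compl V C; rewrite (capv_idPr CV); have := cyc_rank V; rewrite -/C; lia.
Qed.

Lemma cyc_flat V : flat rho V -> flat rho (cyc rho V).
Proof.
move=> flatV x xC; have [xV | xV] := boolP (x \in V); last first.
  exact: flat_rank_add_line flatV (cyc_sub V) xV.
have CxV : (cyc rho V + <[x]> <= V)%VS by rewrite subv_add cyc_sub -memvE.
have := rho_le_codim CxV; have := dimv_add_line xC; have := dimvS CxV.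
have := cyc_rank V; lia.
Qed.

Lemma cyclic_rank_hyperplane Z U W y : cyclic rho Z -> y \in Z -> (Z <= U)%VS ->
  (W + <[y]> = U)%VS -> rho U <= rho W.
Proof.
move=> cycZ yZ ZU WyU.
have ZWy : (Z :&: W + <[y]> = Z)%VS.
  by rewrite vspace_modr -?memvE // WyU (capv_idPl ZU).
have UZW : (U <= Z + W)%VS by rewrite -WyU addvC addvS // -memvE.
have := (cycZ y yZ).2 _ (capvSl Z W) ZWy; have := rho_submod Z W.
have := rho_mono UZW; lia.
Qed.

Lemma cyclic_rank_hyperplane_nsub Z U W x : cyclic rho Z -> (Z <= U)%VS ->
  (W + <[x]> = U)%VS -> ~~ (Z <= W)%VS -> rho U <= rho W.
Proof.
move=> cycZ ZU WxU /subvPn [y yZ yW].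
apply: (cyclic_rank_hyperplane cycZ yZ ZU).
exact: addv_line_exchange WxU (subvP ZU y yZ) yW.
Qed.

Lemma cyclic_sub_cyc Z V : cyclic rho Z -> (Z <= V)%VS -> (Z <= cyc rho V)%VS.
Proof.
move=> cycZ ZV; apply/subvP => x xZ.
apply/mem_cyc/in_cyc_intro => [|W WxV]; first exact: subvP ZV x xZ.
exact: cyclic_rank_hyperplane cycZ xZ ZV WxV.
Qed.

Lemma cyclicD Z1 Z2 : cyclic rho Z1 -> cyclic rho Z2 -> cyclic rho (Z1 + Z2)%VS.
Proof.
move=> cyc1 cyc2 x xZ; apply: in_cyc_intro => // W WxZ.
have [Z1W | /(cyclic_rank_hyperplane_nsub cyc1 (addvSl _ _) WxZ) //] :=
  boolP (Z1 <= W)%VS.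
have [Z2W | /(cyclic_rank_hyperplane_nsub cyc2 (addvSr _ _) WxZ) //] :=
  boolP (Z2 <= W)%VS.
by rewrite rho_mono // subv_add Z1W.
Qed.

Lemma cyclic_cl Z : cyclic rho Z -> cyclic rho (cl rho Z).
Proof.
move=> cycZ x xZ; apply: in_cyc_intro => // W WxZ.
have [ZW | /(cyclic_rank_hyperplane_nsub cycZ (subv_cl Z) WxZ) //] :=
  boolP (Z <= W)%VS.
by rewrite rho_cl rho_mono.
Qed.

End QMatroidTheory.

Theorem corollary4p2 (F : finFieldType) (vT : vectType F)
    (rho : {vspace vT} -> nat) (Hrho : qmatroid rho)
    (Z1 Z2 : {vspace vT})
    (HZ1 : cyclic_flat rho Z1) (HZ2 : cyclic_flat rho Z2) :
  let mt := cyc rho (Z1 :&: Z2)%VS in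
  let jn := cl rho (Z1 + Z2)%VS in
  [/\ (* meet: cyc(Z1 /\ Z2) is the greatest cyclic flat below Z1 and Z2 *)
      [/\ cyclic_flat rho mt, (mt <= Z1)%VS, (mt <= Z2)%VS
        & forall Z, cyclic_flat rho Z -> (Z <= Z1)%VS -> (Z <= Z2)%VS ->
            (Z <= mt)%VS],
      (* join: cl(Z1 + Z2) is the least cyclic flat above Z1 and Z2 *)
      [/\ cyclic_flat rho jn, (Z1 <= jn)%VS, (Z2 <= jn)%VS
        & forall Z, cyclic_flat rho Z -> (Z1 <= Z)%VS -> (Z2 <= Z)%VS ->
            (jn <= Z)%VS],
      (* rho(Z1 meet Z2) = rho(Z1 cap Z2) - dim((Z1 cap Z2)/(Z1 meet Z2)) *)
      (rho mt + (\dim (Z1 :&: Z2)%VS - \dim mt) = rho (Z1 :&: Z2)%VS)%N,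
      rho jn = rho (Z1 + Z2)%VS
    & (rho jn + rho mt + (\dim (Z1 :&: Z2)%VS - \dim mt) <= rho Z1 + rho Z2)%N].
Proof.
move: HZ1 HZ2 => [flat1 cyc1] [flat2 cyc2] mt jn.
have mt_sub : (mt <= Z1 :&: Z2)%VS := cyc_sub _ _.
have jn_sup : (Z1 + Z2 <= jn)%VS := subv_cl Hrho _.
have rho_mt : rho mt + (\dim (Z1 :&: Z2) - \dim mt) = rho (Z1 :&: Z2)%VS :=
  cyc_rank Hrho _.
have rho_jn : rho jn = rho (Z1 + Z2)%VS := rho_cl Hrho _.
split.
- split; first split.
  + exact: (cyc_flat Hrho (flat_cap Hrho flat1 flat2)).
  + exact: (cyc_cyclic Hrho).
  + exact: subv_trans mt_sub (capvSl _ _).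
  + exact: subv_trans mt_sub (capvSr _ _).
  + move=> Z [_ cycZ] ZZ1 ZZ2.
    by apply: (cyclic_sub_cyc Hrho cycZ); rewrite subv_cap ZZ1.
- split; first split.
  + exact: (cl_flat Hrho).
  + exact: (cyclic_cl Hrho (cyclicD Hrho cyc1 cyc2)).
  + exact: subv_trans (addvSl _ _) jn_sup.
  + exact: subv_trans (addvSr _ _) jn_sup.
  + move=> Z [flatZ _] Z1Z Z2Z.
    by apply: (cl_min Hrho flatZ); rewrite subv_add Z1Z.
- exact: rho_mt.
- exact: rho_jn.
- by have := rho_submod Hrho Z1 Z2; lia.
Qed.
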